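(* For every $n\geq 5$, the alternating group $A_n$ is $D$-realisable but not completely $D$-realisable.
   Context: All groups are finite. $D(H)=H'$ denotes the derived subgroup of $H$. A finite group $G$ is $D$-realisable if there is a finite group $H$ with $G\cong D(H)$. It is completely $D$-realisable if there is a finite group $H$ such that: (i) $G\cong D(H)$; (ii) for every subgroup $G_1\leq G$ there exists $H_1\leq H$ with $G_1\cong D(H_1)$; (iii) for every $H_1\leq H$ there exists $G_1\leq G$ with $D(H_1)\cong G_1$. *)

From mathcomp Require Import all_boot all_fingroup all_solvable.
Set Implicit Arguments. Unset Strict Implicit. Unset Printing Implicit Defensive.
Local Open Scope group_scope.

Definition D_realisable (gT : finGroupType) (G : {group gT}) : Prop :=
  exists (hT : finGroupType) (H : {group hT}), G \isog H^`(1).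

Definition completely_D_realisable (gT : finGroupType) (G : {group gT}) : Prop :=
  exists (hT : finGroupType) (H : {group hT}),
    [/\ G \isog H^`(1),
        (forall G1 : {group gT}, G1 \subset G ->
           exists2 H1 : {group hT}, H1 \subset H & G1 \isog H1^`(1))
      & (forall H1 : {group hT}, H1 \subset H ->
           exists2 G1 : {group gT}, G1 \subset G & H1^`(1) \isog G1)].

(* A_n (n >= 5) is simple and not solvable, hence perfect: A_n = A_n'.
   On the other hand, if a group G is isomorphic to a derived subgroup K' and G' is
   cyclic, then K'' is a cyclic normal subgroup of K; its automorphism group is
   abelian, so K' acts trivially on it by conjugation, i.e. G centralises G'.
   A_n contains a copy of S_3, whose derived subgroup A_3 is cyclic but not
   central, so this copy of S_3 is not the derived subgroup of any subgroup of
   any H with H' = A_n. *)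

From mathcomp Require Import all_boot all_fingroup all_solvable.
Set Implicit Arguments. Unset Strict Implicit. Unset Printing Implicit Defensive.
Local Open Scope group_scope.

Lemma der1_sub_cent_cyclic_normal (gT : finGroupType) (K P : {group gT}) :
  P <| K -> cyclic P -> K^`(1) \subset 'C(P).
Proof.
case/andP=> _ nPK cycP.
have nPK' : K^`(1) \subset 'N(P) := subset_trans (der_sub 1 K) nPK.
have abK : abelian (conj_aut P @* K).
  exact: abelianS (Aut_conj_aut P K) (Aut_cyclic_abelian cycP).
by rewrite -ker_conj_aut /ker -sub_morphim_pre // morphim_der // derg1 (commG1P abK).
Qed.

Lemma isog_der1_cents_cyclic_der1 (gT hT : finGroupType)
    (G : {group gT}) (K : {group hT}) :
  G \isog K^`(1) -> cyclic G^`(1) -> G \subset 'C(G^`(1)).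
Proof.
case/isogP=> f injf fG cycG'.
have fG' : f @* G^`(1) = K^`(2) by rewrite morphim_der // fG.
have cycK'' : cyclic K^`(2) by rewrite -fG' injm_cyclic ?der_sub.
rewrite -(injm_cents injf) ?der_sub // fG fG'.
exact: der1_sub_cent_cyclic_normal (der_normal 2 K) cycK''.
Qed.

Lemma der1_Alt (T : finType) : 4 < #|T| -> ('Alt_T)^`(1) = 'Alt_T.
Proof.
move=> T_gt4; have /simpleP[_ simpleAlt] := simple_Alt5 T_gt4.
case: (simpleAlt _ (der_normal 1 _)) => // /derG1P/abelian_sol.
by rewrite solvable_AltF.
Qed.

Section SymmetricGroupOfDegreeThreeInAlt.

Variable m : nat.
Local Notation T := 'I_m.+4.+1.

Let x0 : T := @Ordinal m.+4.+1 0 isT.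
Let x1 : T := @Ordinal m.+4.+1 1 isT.
Let x2 : T := @Ordinal m.+4.+1 2 isT.
Let x3 : T := @Ordinal m.+4.+1 3 isT.
Let x4 : T := @Ordinal m.+4.+1 4 isT.

(* The 3-cycle c and the involution s generate a copy of S_3 acting on
   {x0, x1, x2}; s also swaps x3 and x4 so as to be even. *)
Let c : {perm T} := tperm x0 x1 * tperm x1 x2.
Let s : {perm T} := tperm x0 x1 * tperm x3 x4.
Let S3 := (<[c]> <*> <[s]>)%G.

Lemma S3_sub_Alt : S3 \subset 'Alt_T.
Proof. by rewrite join_subG !cycle_subG !Alt_even !odd_permM !odd_tperm. Qed.

Lemma cJs : c ^ s = c^-1.
Proof.
rewrite /c conjMg !tpermJ invMg !tpermV [tperm x1 x2 * _]conjgC tpermJ.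
by rewrite /s !permM !permE /= tpermC.
Qed.

Lemma cyclic_der1_S3 : cyclic S3^`(1).
Proof.
have nCs : <[s]> \subset 'N(<[c]>).
  by rewrite cycle_subG; apply/normP; rewrite -cycleJ cJs cycleV.
have S3'_sub_C : S3^`(1) \subset <[c]>.
  apply: der1_min; first by rewrite join_subG normG nCs.
  by rewrite quotientYidl // cyclic_abelian ?quotient_cyclic ?cycle_cyclic.
exact: cyclicS S3'_sub_C (cycle_cyclic c).
Qed.

Lemma S3_not_cents_der1 : ~~ (S3 \subset 'C(S3^`(1))).
Proof.
have sS3 : s \in S3 by rewrite mem_gen // inE cycle_id orbT.
have cS3 : c \in S3 by rewrite mem_gen // inE cycle_id.
apply/negP => /centsP/(_ _ sS3 [~ c, s]); rewrite derg1 mem_commg // => /(_ isT).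
rewrite /commg cJs /c invMg !tpermV.
by move/permP/(_ x0); rewrite !permM !permE.
Qed.

End SymmetricGroupOfDegreeThreeInAlt.

Theorem theorem3p2 (n : nat) : 5 <= n ->
  D_realisable ('Alt_('I_n))%G /\ ~ completely_D_realisable ('Alt_('I_n))%G.
Proof.
move=> n_ge5; have [m ->] : exists m, n = m.+4.+1.
  by case: n n_ge5 => [|[|[|[|[|k]]]]] // _; exists k.
split.
  exists {perm 'I_m.+4.+1}, ('Alt_('I_m.+4.+1))%G.
  by rewrite der1_Alt ?card_ord ?isog_refl.
case=> hT [H [_ realise_sub _]].
have [H1 _ isoS3] := realise_sub _ (S3_sub_Alt m).
have := isog_der1_cents_cyclic_der1 isoS3 (cyclic_der1_S3 m).
exact/negP/S3_not_cents_der1.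
Qed.
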